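(* There is an absolute constant $C_8$ such that for all $p\in(0,0.1)$, the number of good sequences of rectangles (over all lengths $n\ge1$) is at most $$\exp\Big[\frac{C_8}{\sqrt q}(\log q^{-1})^2\Big].$$
   Context: $q=-\log(1-p)$, $A=\lceil 1/\sqrt q\rceil$, $B=\lfloor q^{-1}\log q^{-1}\rfloor$. A rectangle is $\{a,\dots,c\}\times\{b,\dots,d\}\subset\mathbb{Z}^2$ with dimensions $(c-a+1,d-b+1)$. A sequence of rectangles $R_1,\dots,R_{n+1}$ ($n\ge1$) with $\dim(R_i)=(a_i,b_i)$, $s_i=a_{i+1}-a_i$, $t_i=b_{i+1}-b_i$ is good if: (i) $(0,0)\in R_1\subseteq\dots\subseteq R_{n+1}$; (ii) $\min(a_1,b_1)\in[A,A+3]$; (iii) $a_n+b_n\le B$; (iv) $a_{n+1}+b_{n+1}>B$; (v) for $i=1,\dots,n$, $s_i\ge a_i\sqrt q$ or $t_i\ge b_i\sqrt q$; (vi) for $i=1,\dots,n$, $s_i<a_i\sqrt q+4$ and $t_i<b_i\sqrt q+4$. *)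

From Stdlib Require Import Reals Lra Lia ZArith List.
Open Scope R_scope.

Definition qq (p : R) : R := - ln (1 - p).

(* floor and ceiling via Stdlib's [up] (up x = least integer > x) *)
Definition Zfloor (x : R) : Z := (up x - 1)%Z.
Definition Zceil (x : R) : Z := (- Zfloor (- x))%Z.

Definition Aconst (p : R) : Z := Zceil (1 / sqrt (qq p)).
Definition Bconst (p : R) : Z := Zfloor (/ qq p * ln (/ qq p)).

(* A rectangle {a..c} x {b..d} is encoded by the quadruple (a, b, c, d). *)
Definition rect : Type := (Z * Z * Z * Z)%type.

Definition in_rect (r : rect) (x y : Z) : Prop :=
  let '(a, b, c, d) := r in (a <= x <= c)%Z /\ (b <= y <= d)%Z.

Definition rect_subset (r r' : rect) : Prop :=
  forall x y : Z, in_rect r x y -> in_rect r' x y.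

Definition dimA (r : rect) : Z := let '(a, _, c, _) := r in (c - a + 1)%Z.
Definition dimB (r : rect) : Z := let '(_, b, _, d) := r in (d - b + 1)%Z.

Definition rect0 : rect := (0, 0, 0, 0)%Z.

(* A list Rs = [R_1; ...; R_{n+1}] (0-based: R_{i+1} = nth i Rs) is good. *)
Definition good (p : R) (Rs : list rect) : Prop :=
  let R_ i := nth i Rs rect0 in
  let a_ i := dimA (R_ i) in
  let b_ i := dimB (R_ i) in
  let n := (length Rs - 1)%nat in
  let sq := sqrt (qq p) in
  (1 <= n)%nat /\
  in_rect (R_ 0%nat) 0 0 /\
  (forall i : nat, (i < n)%nat -> rect_subset (R_ i) (R_ (S i))) /\
  (Aconst p <= Z.min (a_ 0%nat) (b_ 0%nat) <= Aconst p + 3)%Z /\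
  (* (iii) *)
  (a_ (n - 1)%nat + b_ (n - 1)%nat <= Bconst p)%Z /\
  (a_ n + b_ n > Bconst p)%Z /\
  (* (v) and (vi), for i = 1..n (0-based i = 0..n-1) *)
  (forall i : nat, (i < n)%nat ->
     let s := (a_ (S i) - a_ i)%Z in
     let t := (b_ (S i) - b_ i)%Z in
     (IZR s >= IZR (a_ i) * sq \/ IZR t >= IZR (b_ i) * sq) /\
     (IZR s < IZR (a_ i) * sq + 4 /\ IZR t < IZR (b_ i) * sq + 4)).

From Stdlib Require Import Reals List Lra Lia ZArith.
Open Scope R_scope.

(* Write a = dimA, b = dimB and L = log q^-1.  By (v) every step of a good
   sequence multiplies the area a_i b_i by at least 1 + sqrt q.  The area
   starts at A^2 >= 1/q and, by (iii), before the last step it is at most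
   B^2/4 <= (L/q)^2/4, so (1 + sqrt q)^(n-1) <= q^-3 = e^(3L) and a good
   sequence has at most 6 L / sqrt q + 2 rectangles.  By (vi) and
   (iii) all its rectangles contain the origin and have semiperimeter at most
   2B + 8, so they are drawn from a fixed set of q^-O(1) = e^O(L) rectangles.
   Counting the lists of bounded length over that set gives the bound
   exp (O(L^2 / sqrt q)). *)

Fixpoint lists_upto {T : Type} (xs : list T) (m : nat) : list (list T) :=
  match m with
  | O => nil :: nil
  | S m' => nil :: flat_map (fun x => map (cons x) (lists_upto xs m')) xs
  end.

Lemma length_lists_upto {T : Type} (xs : list T) (m : nat) :
  (length (lists_upto xs m) <= (length xs + 1) ^ m)%nat.
Proof.
  induction m as [|m IH]; simpl; [lia|].
  rewrite (flat_map_constant_length (c := length (lists_upto xs m)))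
    by (intros; apply length_map).
  assert (1 <= (length xs + 1) ^ m)%nat
    by (apply Nat.neq_0_lt_0, Nat.pow_nonzero; lia).
  nia.
Qed.

Lemma In_lists_upto {T : Type} (xs : list T) (m : nat) (l : list T) :
  (length l <= m)%nat -> incl l xs -> In l (lists_upto xs m).
Proof.
  revert l; induction m as [|m IH]; intros [|x l] Hl Hincl; simpl in *;
    auto; try lia.
  right; apply in_flat_map; exists x; split.
  - apply Hincl; simpl; auto.
  - apply in_map, IH; [lia | intros y Hy; apply Hincl; simpl; auto].
Qed.

Lemma NoDup_length_le_lists_upto {T : Type} (xs : list T) (m : nat)
    (Ls : list (list T)) :
  NoDup Ls -> (forall l, In l Ls -> (length l <= m)%nat /\ incl l xs) ->
  (length Ls <= (length xs + 1) ^ m)%nat.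
Proof.
  intros Hnd Hls.
  eapply Nat.le_trans; [|apply length_lists_upto].
  apply NoDup_incl_length; [exact Hnd|].
  intros l Hl; destruct (Hls l Hl); now apply In_lists_upto.
Qed.

Definition Zsegment (K : Z) : list Z :=
  map (fun i => Z.of_nat i - K)%Z (seq 0 (Z.to_nat (2 * K + 1))).

Lemma length_Zsegment (K : Z) : length (Zsegment K) = Z.to_nat (2 * K + 1).
Proof. unfold Zsegment; now rewrite length_map, length_seq. Qed.

Lemma In_Zsegment (K z : Z) : (- K <= z <= K)%Z -> In z (Zsegment K).
Proof.
  intros Hz; apply in_map_iff; exists (Z.to_nat (z + K)); split.
  - rewrite Z2Nat.id; lia.
  - apply in_seq; lia.
Qed.

Definition rects_within (K : Z) : list rect :=
  list_prod (list_prod (list_prod (Zsegment K) (Zsegment K)) (Zsegment K))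
    (Zsegment K).

Lemma length_rects_within (K : Z) :
  length (rects_within K) = (Z.to_nat (2 * K + 1) ^ 4)%nat.
Proof.
  change (length (list_prod (list_prod (list_prod (Zsegment K) (Zsegment K))
    (Zsegment K)) (Zsegment K)) = (Z.to_nat (2 * K + 1) ^ 4)%nat).
  rewrite !length_prod, !length_Zsegment; simpl; lia.
Qed.

Lemma In_rects_within (K : Z) (r : rect) :
  in_rect r 0 0 -> (dimA r + dimB r <= K)%Z -> In r (rects_within K).
Proof.
  destruct r as [[[a b] c] d]; simpl; intros [Hac Hbd] HK.
  repeat apply in_prod; apply In_Zsegment; lia.
Qed.

Lemma dims_pos_of_in_rect (r : rect) (x y : Z) :
  in_rect r x y -> (1 <= dimA r)%Z /\ (1 <= dimB r)%Z.
Proof. destruct r as [[[a b] c] d]; simpl; lia. Qed.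

Lemma rect_subset_dims (r r' : rect) :
  rect_subset r r' -> in_rect r 0 0 ->
  (dimA r <= dimA r')%Z /\ (dimB r <= dimB r')%Z.
Proof.
  destruct r as [[[a b] c] d], r' as [[[a' b'] c'] d']; unfold rect_subset.
  simpl; intros Hsub Horigin.
  destruct (Hsub a b) as [? ?]; [lia|].
  destruct (Hsub c d) as [? ?]; [lia|].
  lia.
Qed.

Lemma nat_ceiling (x : R) : 0 <= x -> exists m : nat, x <= INR m <= x + 1.
Proof.
  intros Hx; exists (Z.to_nat (up x)).
  destruct (archimed x) as [Hup1 Hup2].
  assert (0 < up x)%Z by (apply lt_0_IZR; lra).
  rewrite INR_IZR_INZ, Z2Nat.id by lia; lra.
Qed.

Lemma ln_lt_self (x : R) : 0 < x -> ln x < x.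
Proof. intros Hx; pose proof (exp_ineq1_le (ln x)); rewrite exp_ln in *; lra. Qed.

Lemma exp_INR_mult (k : nat) (x : R) : exp (INR k * x) = exp x ^ k.
Proof.
  induction k as [|k IH]; [simpl; rewrite Rmult_0_l; apply exp_0|].
  rewrite S_INR, Rmult_plus_distr_r, Rmult_1_l, exp_plus, IH; simpl; lra.
Qed.

Lemma exp_half_le_1_plus (x : R) : 0 <= x <= 1 -> exp (x / 2) <= 1 + x.
Proof.
  intros Hx; pose proof (exp_ineq1_le (- (x / 2))).
  assert (exp (x / 2) * exp (- (x / 2)) = 1)
    by (rewrite <- exp_plus, Rplus_opp_r; apply exp_0).
  pose proof (exp_pos (x / 2)); nra.
Qed.

Lemma pow_1_plus_le_exp_index (s c : R) (k : nat) :
  0 < s <= 1 -> (1 + s) ^ k <= exp c -> INR k <= 2 * c / s.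
Proof.
  intros Hs Hk.
  assert (Hexp : exp (INR k * (s / 2)) <= exp c).
  { rewrite exp_INR_mult; eapply Rle_trans; [|exact Hk].
    apply pow_incr; split; [left; apply exp_pos | apply exp_half_le_1_plus; lra]. }
  destruct (Rle_lt_dec (INR k * (s / 2)) c) as [Hle|Hlt].
  - apply (Rmult_le_reg_r (s / 2)); [lra|].
    replace (2 * c / s * (s / 2)) with c by (field; lra); exact Hle.
  - apply exp_increasing in Hlt; lra.
Qed.

Lemma area_growth (a b : nat -> R) (s : R) (N : nat) :
  0 <= s ->
  (forall i, (i < N)%nat ->
     0 <= a i <= a (S i) /\ 0 <= b i <= b (S i) /\
     (a (S i) - a i >= a i * s \/ b (S i) - b i >= b i * s)) ->
  a 0%nat * b 0%nat * (1 + s) ^ N <= a N * b N.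
Proof.
  intros Hs; induction N as [|N IH]; intros Hstep; [simpl; lra|].
  destruct (Hstep N (Nat.lt_succ_diag_r N)) as (Ha & Hb & Hgrow).
  assert (IH' : a 0%nat * b 0%nat * (1 + s) ^ N <= a N * b N)
    by (apply IH; intros i Hi; apply Hstep; lia).
  simpl; destruct Hgrow; nra.
Qed.

Section Constants.

Variable p : R.
Hypothesis Hp : 0 < p < 1 / 10.

Local Notation q := (qq p).
Local Notation L := (ln (/ qq p)).

Lemma qq_bounds : 0 < q < 1 / 9.
Proof.
  unfold qq; split.
  - assert (ln (1 - p) < 0) by (rewrite <- ln_1; apply ln_increasing; lra); lra.
  - rewrite <- ln_Rinv by lra.
    assert (/ (1 - p) < 10 / 9).
    { apply (Rmult_lt_reg_r (1 - p)); [lra|]; rewrite Rinv_l by lra; lra. }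
    assert (ln (/ (1 - p)) <= / (1 - p) - 1).
    { pose proof (exp_ineq1_le (ln (/ (1 - p)))).
      rewrite exp_ln in * by (apply Rinv_0_lt_compat; lra); lra. }
    lra.
Qed.

Lemma inv_qq_gt_9 : 9 < / q.
Proof.
  pose proof qq_bounds.
  apply (Rmult_lt_reg_r q); [lra|]; rewrite Rinv_l by lra; lra.
Qed.

Lemma sqrt_qq_bounds : 0 < sqrt q < 1 / 3.
Proof.
  pose proof qq_bounds.
  assert (0 < sqrt q) by (apply sqrt_lt_R0; lra).
  assert (sqrt q * sqrt q = q) by (apply sqrt_sqrt; lra).
  nra.
Qed.

Lemma exp_ln_inv_qq : exp L = / q.
Proof. apply exp_ln; pose proof inv_qq_gt_9; lra. Qed.

Lemma ln_inv_qq_bounds : 2 < L < / q.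
Proof.
  pose proof inv_qq_gt_9; split; [|apply ln_lt_self; lra].
  rewrite <- (ln_exp 2).
  assert (exp 2 <= 9).
  { replace 2 with (1 + 1) by lra; rewrite exp_plus.
    pose proof exp_le_3; pose proof (exp_pos 1); nra. }
  apply ln_increasing; [apply exp_pos | lra].
Qed.

Lemma Aconst_ge : / sqrt q <= IZR (Aconst p).
Proof. unfold Aconst; rewrite <- Rdiv_1_l; apply (Zceil_bound (1 / sqrt q)). Qed.

Lemma Bconst_le : IZR (Bconst p) <= / q * L.
Proof. apply (Zfloor_bound (/ q * L)). Qed.

Lemma Bconst_nonneg : (0 <= Bconst p)%Z.
Proof.
  pose proof inv_qq_gt_9; pose proof ln_inv_qq_bounds.
  apply (Zfloor_lub 0 (/ q * L)); nra.
Qed.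

(* 4B + 17 <= 4 L / q + 17 <= q^-3, using L < 1/q and 1/q > 9. *)
Lemma box_side_le_exp : IZR (4 * Bconst p + 17) <= exp (3 * L).
Proof.
  pose proof inv_qq_gt_9; pose proof ln_inv_qq_bounds; pose proof Bconst_le.
  replace (3 * L) with (L + L + L) by lra; rewrite !exp_plus, exp_ln_inv_qq.
  rewrite plus_IZR, mult_IZR.
  assert (/ q * L <= / q * / q) by (apply Rmult_le_compat_l; lra).
  nra.
Qed.

Lemma sequences_count_le_exp (m : nat) :
  INR m <= 6 * L / sqrt q + 3 ->
  (IZR (4 * Bconst p + 17) ^ 4 + 1) ^ m <= exp (85 / sqrt q * L ^ 2).
Proof.
  intros Hm.
  pose proof sqrt_qq_bounds; pose proof ln_inv_qq_bounds; pose proof inv_qq_gt_9.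
  pose proof box_side_le_exp as Hbox.
  assert (Hbox0 : 0 <= IZR (4 * Bconst p + 17))
    by (apply IZR_le; pose proof Bconst_nonneg; lia).
  assert (Hletter : IZR (4 * Bconst p + 17) ^ 4 + 1 <= exp (13 * L)).
  { assert (Hbox4 : IZR (4 * Bconst p + 17) ^ 4 <= exp (INR 4 * (3 * L)))
      by (rewrite exp_INR_mult; apply pow_incr; lra).
    replace (13 * L) with (INR 4 * (3 * L) + L) by (simpl; lra).
    rewrite exp_plus, exp_ln_inv_qq.
    assert (1 <= exp (INR 4 * (3 * L))).
    { pose proof (exp_ineq1_le (INR 4 * (3 * L))); simpl in *; lra. }
    nra. }
  eapply Rle_trans.
  { apply pow_incr; split; [|exact Hletter].
    pose proof (pow_le _ 4 Hbox0); lra. }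
  rewrite <- exp_INR_mult; left; apply exp_increasing.
  assert (Hexpand : (6 * L / sqrt q + 3) * (13 * L)
                    = 78 / sqrt q * L ^ 2 + 39 * L) by (field; lra).
  assert (39 * L < 7 / sqrt q * L ^ 2).
  { apply (Rmult_lt_reg_r (sqrt q)); [lra|].
    replace (7 / sqrt q * L ^ 2 * sqrt q) with (7 * L * L) by (field; lra).
    nra. }
  nra.
Qed.

End Constants.

Section GoodSequence.

Variables (p : R) (Rs : list rect).
Hypotheses (Hp : 0 < p < 1 / 10) (Hg : good p Rs).

Local Notation n := (length Rs - 1)%nat.
Local Notation a i := (dimA (nth i Rs rect0)).
Local Notation b i := (dimB (nth i Rs rect0)).
Local Notation sq := (sqrt (qq p)).

Lemma good_in_rect (i : nat) : (i <= n)%nat -> in_rect (nth i Rs rect0) 0 0.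
Proof.
  destruct Hg as (_ & H0 & Hsub & _).
  induction i as [|i IH]; intros Hi; [exact H0|].
  apply (Hsub i); [lia | apply IH; lia].
Qed.

Lemma good_dims_mono (i : nat) :
  (i < n)%nat -> (a i <= a (S i))%Z /\ (b i <= b (S i))%Z.
Proof.
  destruct Hg as (_ & _ & Hsub & _); intros Hi.
  apply rect_subset_dims; [apply Hsub | apply good_in_rect]; lia.
Qed.

Lemma good_dims_le (i j : nat) :
  (i <= j <= n)%nat -> (a i <= a j)%Z /\ (b i <= b j)%Z.
Proof.
  intros [Hij Hjn]; induction Hij as [|j Hij IH]; [lia|].
  destruct (good_dims_mono j) as [? ?]; [lia|].
  specialize (IH ltac:(lia)); lia.
Qed.

Lemma good_dims_pos (i : nat) : (i <= n)%nat -> (1 <= a i)%Z /\ (1 <= b i)%Z.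
Proof. intros Hi; exact (dims_pos_of_in_rect _ 0 0 (good_in_rect i Hi)). Qed.

Lemma good_area_ge :
  / qq p * (1 + sq) ^ (n - 1) <= IZR (a (n - 1)) * IZR (b (n - 1)).
Proof.
  destruct Hg as (_ & _ & _ & HA & _ & _ & Hv).
  pose proof (sqrt_qq_bounds p Hp); pose proof (Aconst_ge p).
  assert (Hq : / qq p = / sq * / sq).
  { rewrite <- Rinv_mult, sqrt_sqrt; [reflexivity|].
    pose proof (qq_bounds p Hp); lra. }
  assert (0 < / sq) by (apply Rinv_0_lt_compat; lra).
  assert (IZR (Aconst p) <= IZR (a 0)) by (apply IZR_le; lia).
  assert (IZR (Aconst p) <= IZR (b 0)) by (apply IZR_le; lia).
  eapply Rle_trans;
    [|apply (area_growth (fun i => IZR (a i)) (fun i => IZR (b i)))].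
  - apply Rmult_le_compat_r; [apply pow_le; lra|].
    rewrite Hq; apply Rmult_le_compat; lra.
  - lra.
  - intros i Hi; destruct (Hv i) as [Hgrow _]; [lia|].
    rewrite !minus_IZR in Hgrow.
    destruct (good_dims_pos i) as [Hai Hbi]; [lia|].
    destruct (good_dims_mono i) as [Hmi Hmb]; [lia|].
    apply IZR_le in Hai, Hbi, Hmi, Hmb; lra.
Qed.

(* By (vi) the last step multiplies each side by less than 4/3 and adds
   less than 4, and by (iii) the previous semiperimeter is at most B. *)
Lemma good_last_dims_sum_le : (a n + b n <= 2 * Bconst p + 8)%Z.
Proof.
  destruct Hg as (Hn & _ & _ & _ & Hiii & _ & Hv).
  pose proof (sqrt_qq_bounds p Hp); pose proof (Bconst_nonneg p Hp) as HB0.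
  destruct (Hv (n - 1)%nat) as [_ [Hsa Hsb]]; [lia|].
  replace (S (n - 1)) with n in Hsa, Hsb by lia.
  rewrite minus_IZR in Hsa, Hsb.
  destruct (good_dims_pos (n - 1)) as [Ha Hb]; [lia|].
  apply IZR_le in Ha, Hb, Hiii, HB0; rewrite plus_IZR in Hiii.
  apply le_IZR; rewrite !plus_IZR, mult_IZR; nra.
Qed.

Lemma good_incl_rects_within : incl Rs (rects_within (2 * Bconst p + 8)).
Proof.
  intros r Hr; destruct (In_nth Rs r rect0 Hr) as (i & Hi & <-).
  destruct (good_dims_le i n) as [? ?]; [lia|].
  pose proof good_last_dims_sum_le.
  apply In_rects_within; [apply good_in_rect|]; lia.
Qed.

Lemma good_growth_le_exp : (1 + sq) ^ (n - 1) <= exp (3 * ln (/ qq p)).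
Proof.
  destruct Hg as (_ & _ & _ & _ & Hiii & _ & _).
  pose proof (inv_qq_gt_9 p Hp); pose proof (ln_inv_qq_bounds p Hp).
  pose proof (Bconst_le p) as HB; pose proof (Bconst_nonneg p Hp) as HB0.
  pose proof good_area_ge; pose proof (exp_ln_inv_qq p Hp) as HeL.
  destruct (good_dims_pos (n - 1)) as [Ha Hb]; [lia|].
  apply IZR_le in Ha, Hb, Hiii, HB0; rewrite plus_IZR in Hiii.
  set (x := IZR (a (n - 1))) in *; set (y := IZR (b (n - 1))) in *.
  set (L := ln (/ qq p)) in *.
  assert (Hxy : x * y <= (/ qq p * L) * (/ qq p * L) / 4).
  { assert (x * y <= (x + y) * (x + y) / 4)
      by (pose proof (Rle_0_sqr (x - y)); unfold Rsqr in *; lra).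
    assert ((x + y) * (x + y) <= (/ qq p * L) * (/ qq p * L))
      by (apply Rmult_le_compat; lra).
    lra. }
  replace (3 * L) with (L + L + L) by lra.
  rewrite !exp_plus, HeL.
  assert (0 <= (1 + sq) ^ (n - 1))
    by (apply pow_le; pose proof (sqrt_qq_bounds p Hp); lra).
  assert (/ qq p * L * L <= / qq p * / qq p * / qq p).
  { assert (L * L <= / qq p * / qq p) by nra; nra. }
  nra.
Qed.

Lemma good_length_le :
  INR (length Rs) <= 6 * ln (/ qq p) / sq + 2.
Proof.
  destruct Hg as (Hn & _).
  pose proof (sqrt_qq_bounds p Hp).
  assert (INR (n - 1) <= 2 * (3 * ln (/ qq p)) / sq)
    by (apply pow_1_plus_le_exp_index; [lra | apply good_growth_le_exp]).
  replace (length Rs) with (n - 1 + 2)%nat by lia.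
  rewrite plus_INR; simpl; lra.
Qed.

End GoodSequence.

Theorem lemma14 :
  exists C8 : R, forall p : R, 0 < p < 1/10 ->
    forall L : list (list rect),
      NoDup L -> Forall (good p) L ->
      INR (length L) <= exp (C8 / sqrt (qq p) * (ln (/ qq p)) ^ 2).
Proof.
  exists 85; intros p Hp Ls Hnd Hgood.
  rewrite Forall_forall in Hgood.
  pose proof (sqrt_qq_bounds p Hp); pose proof (ln_inv_qq_bounds p Hp).
  destruct (nat_ceiling (6 * ln (/ qq p) / sqrt (qq p) + 2)) as (m & Hm1 & Hm2).
  { assert (0 < 6 * ln (/ qq p) / sqrt (qq p)) by (apply Rdiv_lt_0_compat; lra).
    lra. }
  assert (Hcount : (length Ls <=
            (length (rects_within (2 * Bconst p + 8)) + 1) ^ m)%nat).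
  { apply NoDup_length_le_lists_upto; [exact Hnd|].
    intros Rs HRs; split.
    - apply INR_le; pose proof (good_length_le p Rs Hp (Hgood Rs HRs)); lra.
    - exact (good_incl_rects_within p Rs Hp (Hgood Rs HRs)). }
  apply le_INR in Hcount.
  rewrite length_rects_within, pow_INR, plus_INR, pow_INR,
    (INR_IZR_INZ (Z.to_nat _)), Z2Nat.id in Hcount
    by (pose proof (Bconst_nonneg p Hp); lia).
  replace (2 * (2 * Bconst p + 8) + 1)%Z with (4 * Bconst p + 17)%Z in Hcount
    by lia.
  eapply Rle_trans; [exact Hcount|].
  apply sequences_count_le_exp; [exact Hp | simpl; lra].
Qed.
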